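(* Let $d$ be a pseudo-metric on $[0,1]$ and $\Psi:\mathbb R_+\to\mathbb R_+$ continuous, strictly increasing with $\Psi(0)=0$, such that $F(1):=\mathcal V(\Psi,d)<\infty$. Then $$N([0,1],d,\varepsilon)\le\frac{4F(1)}{\Psi(\varepsilon)}\qquad\text{for all }0<\varepsilon<\Psi^{-1}(F(1)).$$ More generally, with $F(t)=\sup\sum_{i=1}^n\Psi(d(t_i,t_{i-1}))$ over partitions $0=t_0<\dots<t_n=t$, for every $m\in\mathbb Z$ and integer $j\ge1$ the set $S_{m,j}=\{s\in[0,1]:F(s)\in((j-1)2^{-m},j2^{-m}]\}$ satisfies $N(S_{m,j},d,\varepsilon)\le 2^{-m+2}/\Psi(\varepsilon)$ for $0<\varepsilon<\Psi^{-1}(2^{-m})$.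
   Context: $\mathcal V(\Psi,d)=\sup\sum_{i=1}^n\Psi(d(t_i,t_{i-1}))$ over all partitions $0=t_0<\dots<t_n=1$. For $A\subset[0,1]$, $N(A,d,\varepsilon)$ is the smallest number of open $d$-balls of radius $\varepsilon$ (centred in $A$) covering $A$. *)

From Stdlib Require Import Reals Lra List.
Open Scope R_scope.

Definition in01 (x : R) : Prop := 0 <= x <= 1.

Definition pseudo_metric01 (d : R -> R -> R) : Prop :=
  (forall x y, in01 x -> in01 y -> 0 <= d x y) /\
  (forall x, in01 x -> d x x = 0) /\
  (forall x y, in01 x -> in01 y -> d x y = d y x) /\
  (forall x y z, in01 x -> in01 y -> in01 z -> d x z <= d x y + d y z).

Definition nonneg (x : R) : Prop := 0 <= x.

Definition admissible_Psi (Psi : R -> R) : Prop :=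
  (forall x, 0 <= x -> 0 <= Psi x) /\
  (forall x, 0 <= x -> continue_in Psi nonneg x) /\
  (forall x y, 0 <= x -> x < y -> Psi x < Psi y) /\
  Psi 0 = 0.

Definition is_partition (t : nat -> R) (n : nat) (T : R) : Prop :=
  t O = 0 /\ t n = T /\ (forall i, (i < n)%nat -> t i < t (S i)).

Fixpoint var_sum (Psi : R -> R) (d : R -> R -> R) (t : nat -> R) (n : nat) : R :=
  match n with
  | O => 0
  | S k => var_sum Psi d t k + Psi (d (t (S k)) (t k))
  end.

Definition var_sums (Psi : R -> R) (d : R -> R -> R) (T : R) (v : R) : Prop :=
  exists t n, is_partition t n T /\ v = var_sum Psi d t n.

Definition is_variation (Psi : R -> R) (d : R -> R -> R) (T v : R) : Prop :=
  is_lub (var_sums Psi d T) v.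

Definition is_cover (A : R -> Prop) (d : R -> R -> R) (eps : R) (c : list R) : Prop :=
  (forall x, In x c -> A x) /\
  (forall a, A a -> exists x, In x c /\ d x a < eps).

Definition covering_number (A : R -> Prop) (d : R -> R -> R) (eps : R) (n : nat) : Prop :=
  (exists c, is_cover A d eps c /\ length c = n) /\
  (forall c, is_cover A d eps c -> (n <= length c)%nat).

Definition S_mj (F : R -> R) (m : Z) (j : nat) (s : R) : Prop :=
  in01 s /\ (INR j - 1) * powerRZ 2 (- m) < F s /\ F s <= INR j * powerRZ 2 (- m).

(** If [s < t] then appending [t] to a partition of [[0,s]] gives [F s + Psi (d t s) <= F t].
    Hence two points whose values of [F] differ by less than [Psi eps] are at [d]-distance
    less than [eps]. Cutting a band [lo <= F <= lo + L] of values into [N] slices of height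
    [Psi eps], with [N] the least integer above [L / Psi eps], any single point of a slice
    is the centre of a ball covering that whole slice; so [N <= 2 L / Psi eps] balls suffice.
    Both claims are this bound for the bands [[0, F 1]] and [((j-1) 2^-m, j 2^-m]]. *)
From Stdlib Require Import Reals Lra List Lia Classical ZArith.
Open Scope R_scope.

Lemma var_sum_ext Psi d t1 t2 n :
  (forall i, (i <= n)%nat -> t1 i = t2 i) -> var_sum Psi d t1 n = var_sum Psi d t2 n.
Proof.
  induction n as [|n IH]; intros Heq; simpl; auto.
  rewrite IH, (Heq (S n)), (Heq n); auto; intros; apply Heq; lia.
Qed.

Lemma var_sums_extend Psi d s t v :
  s < t -> var_sums Psi d s v -> var_sums Psi d t (v + Psi (d t s)).
Proof.
  intros Hst [p [n [[Hp0 [Hpn Hincr]] Hv]]].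
  set (q := fun i => if (i <=? n)%nat then p i else t).
  assert (Hq_le : forall i, (i <= n)%nat -> q i = p i).
  { intros i Hi; unfold q; now rewrite (proj2 (Nat.leb_le i n) Hi). }
  assert (Hq_top : q (S n) = t).
  { unfold q; now rewrite (proj2 (Nat.leb_gt (S n) n) (Nat.lt_succ_diag_r n)). }
  exists q, (S n); split; [split; [|split]|].
  - rewrite Hq_le by lia; exact Hp0.
  - exact Hq_top.
  - intros i Hi; destruct (Nat.eq_dec i n) as [->|Hne].
    + rewrite Hq_top, Hq_le, Hpn by lia; exact Hst.
    + rewrite !Hq_le by lia; apply Hincr; lia.
  - cbn [var_sum]; rewrite (var_sum_ext Psi d q p n Hq_le), Hq_top, Hq_le, Hpn, Hv by lia.
    reflexivity.
Qed.

Section VariationCover.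

Variables (d : R -> R -> R) (Psi : R -> R) (F : R -> R).
Hypothesis Hd : pseudo_metric01 d.
Hypothesis HPsi : admissible_Psi Psi.
Hypothesis HF : forall t, in01 t -> is_variation Psi d t (F t).

Lemma variation_step s t : in01 s -> in01 t -> s < t -> F s + Psi (d t s) <= F t.
Proof.
  intros Hs Ht Hst.
  destruct (HF s Hs) as [_ Hleast]; destruct (HF t Ht) as [Hupper _].
  enough (F s <= F t - Psi (d t s)) by lra.
  apply Hleast; intros v Hv.
  pose proof (Hupper _ (var_sums_extend Psi d s t v Hst Hv)); lra.
Qed.

Lemma variation_monotone s t : in01 s -> in01 t -> s <= t -> F s <= F t.
Proof.
  intros Hs Ht [Hst| <-]; [|lra].
  pose proof (variation_step s t Hs Ht Hst).
  assert (0 <= Psi (d t s)) by (apply (proj1 HPsi), (proj1 Hd); assumption).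
  lra.
Qed.

(* The one-point partition [t 0 = 0] of [[0,0]] has empty sum. *)
Lemma variation_nonneg t : in01 t -> 0 <= F t.
Proof.
  intros Ht.
  assert (H0 : in01 0) by (unfold in01; lra).
  apply Rle_trans with (F 0); [|apply variation_monotone; auto; apply Ht].
  apply (proj1 (HF 0 H0)); exists (fun _ => 0), O.
  split; [split; [|split]|]; simpl; auto; intros; lia.
Qed.

Lemma Psi_pos eps : 0 < eps -> 0 < Psi eps.
Proof.
  intros He; destruct HPsi as [_ [_ [Hincr H0]]]; rewrite <- H0; apply Hincr; lra.
Qed.

Lemma Psi_lt_inv x y : 0 <= y -> Psi x < Psi y -> x < y.
Proof.
  intros Hy Hlt; destruct (Rlt_or_le x y) as [|[Hyx| ->]]; auto; exfalso.
  - pose proof ((proj1 (proj2 (proj2 HPsi))) y x Hy Hyx); lra.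
  - lra.
Qed.

Lemma dist_lt_of_variation_close eps s t :
  0 < eps -> in01 s -> in01 t -> Rabs (F s - F t) < Psi eps -> d s t < eps.
Proof.
  intros He Hs Ht Hclose; destruct Hd as [_ [Hdiag [Hsym _]]].
  assert (Hstep : forall u v, in01 u -> in01 v -> u < v ->
                    Rabs (F u - F v) < Psi eps -> d v u < eps).
  { intros u v Hu Hv Huv Huv_close; apply Psi_lt_inv; [lra|].
    pose proof (variation_step u v Hu Hv Huv); apply Rabs_def2 in Huv_close; lra. }
  destruct (Rtotal_order s t) as [Hlt|[<-|Hgt]].
  - rewrite Hsym by assumption; auto.
  - rewrite Hdiag; assumption.
  - apply Hstep; auto; rewrite Rabs_minus_sym; assumption.
Qed.

(* Slice the band by [F a < lo + N Psi eps]: the top slice is covered by one ball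
   centred at any of its points. *)
Lemma cover_of_variation_band eps lo N (A : R -> Prop) :
  0 < eps -> (forall a, A a -> in01 a /\ lo <= F a < lo + INR N * Psi eps) ->
  exists c, is_cover A d eps c /\ (length c <= N)%nat.
Proof.
  intros He; revert A; induction N as [|N IH]; intros A HA.
  - exists nil; split; [split|]; simpl; auto.
    + intros x [].
    + intros a Ha; apply HA in Ha; simpl in Ha; lra.
  - set (cut := lo + INR N * Psi eps).
    destruct (IH (fun a => A a /\ F a < cut)) as [c [[Hc_in Hc_cov] Hc_len]].
    { intros a [Ha Hcut]; apply HA in Ha; unfold cut in Hcut; split; [tauto|split; lra]. }
    destruct (classic (exists x, A x /\ cut <= F x)) as [[x [Hx Hxcut]]|Hnone].
    + exists (x :: c); split; [split|]; simpl; try lia.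
      * intros y [<-|Hy]; [assumption|apply Hc_in in Hy; tauto].
      * intros a Ha; destruct (Rlt_or_le (F a) cut) as [Hlow|Hhigh].
        -- destruct (Hc_cov a (conj Ha Hlow)) as [y [Hy Hdy]]; eauto.
        -- exists x; split; auto.
           apply HA in Ha; apply HA in Hx; rewrite S_INR in Ha, Hx.
           apply dist_lt_of_variation_close; try tauto.
           apply Rabs_def1; unfold cut in *; lra.
    + exists c; split; [split|]; auto.
      * intros y Hy; apply Hc_in in Hy; tauto.
      * intros a Ha; apply Hc_cov; split; auto.
        destruct (Rlt_or_le (F a) cut); auto.
        exfalso; eauto.
Qed.

End VariationCover.

Lemma covering_number_of_cover A d eps c :
  is_cover A d eps c -> exists n, covering_number A d eps n /\ (n <= length c)%nat.
Proof.
  set (P := fun k => exists c, is_cover A d eps c /\ length c = k).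
  enough (Hleast : forall k, P k -> exists n, P n /\ forall m, P m -> (n <= m)%nat).
  { intros Hc; destruct (Hleast (length c)) as [n [Pn Hmin]]; [exists c; auto|].
    exists n; split; [split; [exact Pn|]|]; intros; apply Hmin; eexists; eauto. }
  intros k; induction k as [k IH] using (well_founded_induction lt_wf); intros Pk.
  destruct (classic (exists m, (m < k)%nat /\ P m)) as [[m [Hm Pm]]|Hnone].
  - exact (IH m Hm Pm).
  - exists k; split; auto; intros m Pm.
    destruct (Nat.lt_ge_cases m k); auto; exfalso; eauto.
Qed.

Lemma nat_multiple_between p L : 0 < p -> p <= L -> exists N : nat, L < INR N * p <= 2 * L.
Proof.
  intros Hp HpL; destruct (archimed (L / p)) as [Hup1 Hup2].
  assert (HLp : 1 <= L / p) by (apply Rmult_le_reg_r with p; [lra|field_simplify; lra]).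
  assert (Hz : (0 <= up (L / p))%Z) by (apply le_IZR; lra).
  exists (Z.to_nat (up (L / p))); rewrite INR_IZR_INZ, Z2Nat.id by assumption.
  assert (HL : L = L / p * p) by (field; lra).
  set (q := L / p) in *; clearbody q; split; nra.
Qed.

Lemma covering_number_variation_band d Psi F eps lo L (A : R -> Prop) :
  pseudo_metric01 d -> admissible_Psi Psi ->
  (forall t, in01 t -> is_variation Psi d t (F t)) ->
  0 < eps -> Psi eps <= L -> (forall a, A a -> in01 a /\ lo <= F a <= lo + L) ->
  exists n, covering_number A d eps n /\ INR n <= 2 * L / Psi eps.
Proof.
  intros Hd HPsi HF He HL HA.
  pose proof (Psi_pos Psi HPsi eps He) as Hp.
  destruct (nat_multiple_between (Psi eps) L Hp HL) as [N [HN_low HN_high]].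
  destruct (cover_of_variation_band d Psi F Hd HPsi HF eps lo N A He) as [c [Hc Hlen]].
  { intros a Ha; apply HA in Ha; split; [tauto|lra]. }
  destruct (covering_number_of_cover A d eps c Hc) as [n [Hn Hn_len]].
  exists n; split; auto.
  apply le_INR in Hn_len; apply le_INR in Hlen.
  apply Rmult_le_reg_r with (Psi eps); [exact Hp|].
  unfold Rdiv; rewrite Rmult_assoc, Rinv_l by lra; nra.
Qed.

Theorem mainTheorem12 (d : R -> R -> R) (Psi : R -> R) (F : R -> R)
  (Hd : pseudo_metric01 d) (HPsi : admissible_Psi Psi)
  (HF : forall t, in01 t -> is_variation Psi d t (F t)) :
  (forall eps, 0 < eps -> Psi eps < F 1 ->
     exists n, covering_number in01 d eps n /\ INR n <= 4 * F 1 / Psi eps) /\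
  (forall (m : Z) (j : nat), (1 <= j)%nat ->
     forall eps, 0 < eps -> Psi eps < powerRZ 2 (- m) ->
     exists n, covering_number (S_mj F m j) d eps n /\
               INR n <= powerRZ 2 (- m + 2) / Psi eps).
Proof.
  assert (H1 : in01 1) by (unfold in01; lra).
  split.
  - intros eps He Hlt.
    destruct (covering_number_variation_band d Psi F eps 0 (F 1) in01) as [n [Hn Hbound]];
      auto; try lra.
    { intros a Ha; split; [exact Ha|].
      split; [apply (variation_nonneg d Psi F Hd HPsi HF a Ha)|].
      rewrite Rplus_0_l; apply (variation_monotone d Psi F Hd HPsi HF); auto; apply Ha. }
    exists n; split; auto.
    pose proof (Psi_pos Psi HPsi eps He).
    apply Rle_trans with (1 := Hbound); unfold Rdiv.
    apply Rmult_le_compat_r; [left; apply Rinv_0_lt_compat|]; lra.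
  - intros m j Hj eps He Hlt.
    destruct (covering_number_variation_band d Psi F eps ((INR j - 1) * powerRZ 2 (- m))
                (powerRZ 2 (- m)) (S_mj F m j)) as [n [Hn Hbound]]; auto; try lra.
    { intros a [Ha [Hlow Hhigh]]; split; [exact Ha|lra]. }
    exists n; split; auto.
    pose proof (Psi_pos Psi HPsi eps He); pose proof (powerRZ_lt 2 (- m) ltac:(lra)).
    rewrite powerRZ_add by lra; replace (powerRZ 2 2) with 4 by (simpl; lra).
    apply Rle_trans with (1 := Hbound); unfold Rdiv.
    apply Rmult_le_compat_r; [left; apply Rinv_0_lt_compat|]; lra.
Qed.
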